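(* Let $N\geq 1$, let $U\in M_{2N}(\mathbb{C})$ be unitary with $U^{\rm T}=-U$, and let $\Phi^U_{4N}$ be the map defined on block matrices $X=\begin{pmatrix} X_{11} & X_{12}\\ X_{21} & X_{22}\end{pmatrix}$ ($X_{kl}\in M_{2N}(\mathbb{C})$) by $$\Phi^U_{4N}(X)=\frac{1}{2N}\begin{pmatrix} \mathbb{I}_{2N}\,\mathrm{Tr}X_{22} & -\big(X_{12}+UX_{21}^{\rm T}U^\dagger\big)\\ -\big(X_{21}+UX_{12}^{\rm T}U^\dagger\big) & \mathbb{I}_{2N}\,\mathrm{Tr}X_{11}\end{pmatrix}.$$ Let $W=(\mathrm{id}\otimes\Phi^U_{4N})P^+_{4N}$, where $P^+_{4N}=\frac{1}{4N}\sum_{k,l=1}^{4N}|k\rangle\langle l|\otimes|k\rangle\langle l|$. Then $W$ is an optimal entanglement witness: there is no nonzero positive semidefinite operator $A$ on $\mathbb{C}^{4N}\otimes\mathbb{C}^{4N}$ such that $W-A$ is block-positive (i.e. $\langle\psi\otimes\phi|(W-A)|\psi\otimes\phi\rangle\ge 0$ for all $\psi,\phi\in\mathbb{C}^{4N}$).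
   Context: $\{|k\rangle\}$ is the standard basis of $\mathbb{C}^{4N}$; $\mathrm{id}$ is the identity map on $M_{4N}(\mathbb{C})$. An entanglement witness is a block-positive operator that is not positive semidefinite; it is optimal if subtracting any nonzero positive semidefinite operator destroys block-positivity. *)

From HB Require Import structures.
From mathcomp Require Import all_boot all_order all_algebra.
From mathcomp Require Import reals.
From mathcomp Require Export complex mxtens.
Set Implicit Arguments. Unset Strict Implicit. Unset Printing Implicit Defensive.
Import Order.TTheory GRing.Theory Num.Theory.
Local Open Scope ring_scope.
Local Open Scope sesquilinear_scope.

Section Defs.
Variable R : realType.
Local Notation C := (R[i]).

Definition adjmx {m n} (A : 'M[C]_(m, n)) : 'M[C]_(n, m) := (A ^t*)%sesqui.

Definition psdmx {n} (A : 'M[C]_n) : Prop :=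
  adjmx A = A /\ forall v : 'cV[C]_n, 0 <= (adjmx v *m A *m v) ord0 ord0.

Definition block_positive {n m} (A : 'M[C]_(n * m)) : Prop :=
  forall (psi : 'cV[C]_n) (phi : 'cV[C]_m),
    0 <= (adjmx (psi *t phi) *m A *m (psi *t phi)) ord0 ord0.

Definition entanglement_witness {n m} (W : 'M[C]_(n * m)) : Prop :=
  block_positive W /\ ~ psdmx W.

Definition optimal_EW {n m} (W : 'M[C]_(n * m)) : Prop :=
  entanglement_witness W /\
  ~ exists A : 'M[C]_(n * m), A != 0 /\ psdmx A /\ block_positive (W - A).

Definition PhiU (N : nat) (U : 'M[C]_(2 * N)) (X : 'M[C]_(2 * N + 2 * N))
  : 'M[C]_(2 * N + 2 * N) :=
  let X11 := ulsubmx X in let X12 := ursubmx X in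
  let X21 := dlsubmx X in let X22 := drsubmx X in
  (2 * N)%:R^-1 *:
  block_mx ((\tr X22) *: 1%:M) (- (X12 + U *m X21^T *m adjmx U))
           (- (X21 + U *m X12^T *m adjmx U)) ((\tr X11) *: 1%:M).

(* W = (id ⊗ Phi) P^+, with P^+ = 1/(4N) sum_{k,l} |k><l| ⊗ |k><l| *)
Definition W_U (N : nat) (U : 'M[C]_(2 * N)) : 'M[C]_((2 * N + 2 * N) * (2 * N + 2 * N)) :=
  (4 * N)%:R^-1 *:
  \sum_(k < 2 * N + 2 * N) \sum_(l < 2 * N + 2 * N)
     (delta_mx k l *t PhiU U (delta_mx k l)).
End Defs.

(* Write v = (a, b) and test vectors (x, y) in C^2N (+) C^2N.  The quadratic form of
   Phi^U(v v^dagger) at (x, y) is, up to the factor 1/2N,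
     |b|^2 |x|^2 + |a|^2 |y|^2 - 2 Re(<x,a><b,y> + <x,U conj a><U conj b,y>).
   Antisymmetry of U makes U conj a orthogonal to a, and unitarity gives it the norm of a,
   so Bessel's inequality and AM-GM make this form nonnegative, and it vanishes at
   (x, y) = v.  Since <psi (x) phi, W psi (x) phi> is this form for v = conj psi (up to
   1/4N), W is block-positive and vanishes on every psi (x) conj psi.  A positive A with
   W - A block-positive is therefore isotropic, hence zero, on these vectors, which span
   the whole space; so A = 0.  Finally W is not positive: it is nonzero, and a positive W
   would be such an A. *)

From HB Require Import structures.
From mathcomp Require Import all_boot all_order all_algebra.
From mathcomp Require Import reals complex mxtens.
From mathcomp Require Import ring.
Set Implicit Arguments. Unset Strict Implicit. Unset Printing Implicit Defensive.
Import Order.TTheory GRing.Theory Num.Theory Num.Def.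
Local Open Scope ring_scope.
Local Open Scope sesquilinear_scope.

Section Tensor.
Variable R : comPzRingType.

Lemma tensmxDl m n p q (A B : 'M[R]_(m, n)) (D : 'M[R]_(p, q)) :
  (A + B) *t D = A *t D + B *t D.
Proof. by apply/matrixP => i j; rewrite !mxE mulrDl. Qed.

Lemma tensmxDr m n p q (A : 'M[R]_(m, n)) (B D : 'M[R]_(p, q)) :
  A *t (B + D) = A *t B + A *t D.
Proof. by apply/matrixP => i j; rewrite !mxE mulrDr. Qed.

Lemma tensmxZl m n p q k (A : 'M[R]_(m, n)) (D : 'M[R]_(p, q)) :
  (k *: A) *t D = k *: (A *t D).
Proof. by apply/matrixP => i j; rewrite !mxE mulrA. Qed.

Lemma tensmxZr m n p q k (A : 'M[R]_(m, n)) (D : 'M[R]_(p, q)) :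
  A *t (k *: D) = k *: (A *t D).
Proof. by apply/matrixP => i j; rewrite !mxE mulrCA. Qed.

Lemma tens_delta_col m n (k : 'I_m) (l : 'I_n) :
  (delta_mx k 0 : 'cV[R]_m) *t (delta_mx l 0 : 'cV[R]_n) =
  delta_mx (mxtens_index (k, l)) 0.
Proof.
apply/matrixP => i j.
case: (mxtens_indexP i) => i1 i2; case: (mxtens_indexP j) => j1 j2.
rewrite tensmxE !mxE (ord1 j1) (ord1 j2).
have -> : mxtens_index (0 : 'I_1, 0 : 'I_1) = 0 by apply: val_inj.
rewrite (inj_eq (can_inj (@mxtens_indexK _ _))) xpair_eqE !eqxx !andbT.
by case: (i1 == k); case: (i2 == l); rewrite ?mulr1 ?mulr0.
Qed.

Lemma tensmx11 (A B : 'M[R]_1) : (A *t B) 0 0 = A 0 0 * B 0 0.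
Proof. by rewrite mxE (ord1 (mxtens_unindex _).1) (ord1 (mxtens_unindex _).2). Qed.

End Tensor.

Section DotProduct.
Variable C : numClosedFieldType.

Definition dot n (u v : 'cV[C]_n) : C := (u ^t* *m v) 0 0.

Lemma dotE n (u v : 'cV[C]_n) : dot u v = \sum_i (u i 0)^* * v i 0.
Proof. by rewrite /dot mxE; apply: eq_bigr => i _; rewrite !mxE. Qed.

Lemma dotDl n (u w v : 'cV[C]_n) : dot (u + w) v = dot u v + dot w v.
Proof. by rewrite !dotE -big_split; apply: eq_bigr => i _; rewrite !mxE rmorphD mulrDl. Qed.

Lemma dotDr n (u w v : 'cV[C]_n) : dot v (u + w) = dot v u + dot v w.
Proof. by rewrite !dotE -big_split; apply: eq_bigr => i _; rewrite !mxE mulrDr. Qed.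

Lemma dotZl n k (u v : 'cV[C]_n) : dot (k *: u) v = k^* * dot u v.
Proof. by rewrite !dotE mulr_sumr; apply: eq_bigr => i _; rewrite !mxE rmorphM mulrA. Qed.

Lemma dotZr n k (u v : 'cV[C]_n) : dot v (k *: u) = k * dot v u.
Proof. by rewrite !dotE mulr_sumr; apply: eq_bigr => i _; rewrite !mxE mulrCA. Qed.

Lemma dotNr n (u v : 'cV[C]_n) : dot v (- u) = - dot v u.
Proof. by rewrite -scaleN1r dotZr mulN1r. Qed.

Lemma dotBl n (u w v : 'cV[C]_n) : dot (u - w) v = dot u v - dot w v.
Proof. by rewrite dotDl -scaleN1r dotZl rmorphN1 mulN1r. Qed.

Lemma dotBr n (u w v : 'cV[C]_n) : dot v (u - w) = dot v u - dot v w.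
Proof. by rewrite dotDr dotNr. Qed.

Lemma dot0l n (v : 'cV[C]_n) : dot 0 v = 0.
Proof. by rewrite dotE big1 // => i _; rewrite mxE rmorph0 mul0r. Qed.

Lemma dot0r n (v : 'cV[C]_n) : dot v 0 = 0.
Proof. by rewrite /dot mulmx0 mxE. Qed.

Lemma dot_sumr n (I : Type) (r : seq I) (P : pred I) (u : 'cV[C]_n) F :
  dot u (\sum_(i <- r | P i) F i) = \sum_(i <- r | P i) dot u (F i).
Proof. exact: (big_morph (dot u) (fun x y => dotDr x y u) (dot0r u)). Qed.

Lemma dotC n (u v : 'cV[C]_n) : dot v u = (dot u v)^*.
Proof. by rewrite !dotE rmorph_sum; apply: eq_bigr => i _; rewrite rmorphM /= conjCK mulrC. Qed.

Lemma dot_self_ge0 n (u : 'cV[C]_n) : 0 <= dot u u.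
Proof. by rewrite dotE sumr_ge0 // => i _; rewrite -normCKC exprn_ge0. Qed.

Lemma dot_self_eq0 n (u : 'cV[C]_n) : (dot u u == 0) = (u == 0).
Proof.
rewrite dotE psumr_eq0 => [|i _]; last by rewrite -normCKC exprn_ge0.
apply/allP/eqP => [u0|-> i _]; last by rewrite mxE mulr0 eqxx.
apply/matrixP => i j; rewrite [j]ord1 mxE; apply/eqP.
by have := u0 i (mem_index_enum _); rewrite -normCKC sqrf_eq0 normr_eq0.
Qed.

Lemma conj_dot_self n (u : 'cV[C]_n) : (dot u u)^* = dot u u.
Proof. exact: geC0_conj (dot_self_ge0 u). Qed.

Lemma dot_map_conj n (u v : 'cV[C]_n) : dot (map_mx conjC u) (map_mx conjC v) = dot v u.
Proof. by rewrite !dotE; apply: eq_bigr => i _; rewrite !mxE conjCK mulrC. Qed.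

Lemma trmxC_mul m n p (A : 'M[C]_(m, n)) (B : 'M[C]_(n, p)) :
  (A *m B) ^t* = B ^t* *m A ^t*.
Proof. by rewrite trmx_mul map_mxM. Qed.

Lemma tr_trmxC m n (A : 'M[C]_(m, n)) : (A ^t*)^T = map_mx conjC A.
Proof. by apply/matrixP => i j; rewrite !mxE. Qed.

Lemma trmxC_map_conj m n (A : 'M[C]_(m, n)) : (map_mx conjC A) ^t* = A^T.
Proof. by apply/matrixP => i j; rewrite !mxE conjCK. Qed.

Lemma dot_mulmx m n (A : 'M[C]_(m, n)) u v : dot u (A *m v) = dot (A ^t* *m u) v.
Proof. by rewrite /dot trmxC_mul trmxCK mulmxA. Qed.

Lemma dot_col_mx m1 m2 (a x : 'cV[C]_m1) (b y : 'cV[C]_m2) :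
  dot (col_mx a b) (col_mx x y) = dot a x + dot b y.
Proof. by rewrite /dot tr_col_mx map_row_mx mul_row_col mxE. Qed.

Lemma mulmx_outer n (a b y : 'cV[C]_n) : a *m b ^t* *m y = dot b y *: a.
Proof. by rewrite -mulmxA [b ^t* *m y]mx11_scalar mul_mx_scalar. Qed.

Lemma dot_block_outer n (al be : C) (a b c d x y : 'cV[C]_n) :
  let z := dot x a * dot b y + dot x c * dot d y in
  dot (col_mx x y) (block_mx (be *: 1%:M) (- (a *m b ^t* + c *m d ^t*))
                             (- (b *m a ^t* + d *m c ^t*)) (al *: 1%:M) *m col_mx x y) =
  be * dot x x + al * dot y y - z - z^*.
Proof.
rewrite /= mul_block_col dot_col_mx !mulNmx -!scalemxAl !mul1mx !mulmxDl !mulmx_outer.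
rewrite !(dotDr, dotNr, dotZr) (dotC b y) (dotC a x) (dotC d y) (dotC c x).
by rewrite rmorphD !rmorphM /= !conjCK; ring.
Qed.

Lemma mulmx_quadE n (A : 'M[C]_n) (u : 'cV[C]_n) : (u ^t* *m A *m u) 0 0 = dot u (A *m u).
Proof. by rewrite /dot mulmxA. Qed.

Lemma quad_delta n (u : 'cV[C]_n) k l :
  (u ^t* *m delta_mx k l *m u) 0 0 = (u k 0)^* * u l 0.
Proof.
rewrite -(mul_delta_mx (0 : 'I_1)) mulmxA -colE -mulmxA -rowE mxE big_ord1 !mxE.
by [].
Qed.

Lemma mxtrace_outer n (b : 'cV[C]_n) : \tr (b *m b ^t*) = dot b b.
Proof. by rewrite dotE; apply: eq_bigr => i _; rewrite !mxE big_ord1 !mxE mulrC. Qed.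

Lemma trmxC_tens m n p q (A : 'M[C]_(m, n)) (B : 'M[C]_(p, q)) :
  (A *t B) ^t* = A ^t* *t B ^t*.
Proof. by rewrite trmx_tens map_mxT. Qed.

Lemma bessel_orthogonal_pair n (a c x : 'cV[C]_n) :
  dot a c = 0 -> dot c c = dot a a ->
  `|dot x a| ^+ 2 + `|dot x c| ^+ 2 <= dot a a * dot x x.
Proof.
move=> ac cc; have [a0|a_neq0] := eqVneq a 0.
  have : dot c c == 0 by rewrite cc a0 dot0r.
  by rewrite dot_self_eq0 a0 => /eqP ->; rewrite !dot0r normr0 expr0n addr0 mul0r.
have al_gt0 : 0 < dot a a by rewrite lt_def dot_self_eq0 a_neq0 dot_self_ge0.
set al := dot a a; set p := dot x a; set q := dot x c.
(* [z] is [al x] minus its components along [a] and [c] *)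
pose z := al *: x - p^* *: a - q^* *: c.
have Ez : dot z z = al * (al * dot x x - (`|p| ^+ 2 + `|q| ^+ 2)).
  rewrite /z !dotBl !dotBr !dotZl !dotZr (dotC x a) (dotC x c) (dotC a c) ac cc.
  by rewrite /al /p /q !conjCK conj_dot_self !normCK conjC0; ring.
by have := dot_self_ge0 z; rewrite Ez pmulr_rge0 // subr_ge0.
Qed.

Lemma sqr_normsD_le0 (p q : C) : `|p| ^+ 2 + `|q| ^+ 2 <= 0 -> p = 0 /\ q = 0.
Proof.
move=> h; have : `|p| ^+ 2 + `|q| ^+ 2 == 0 by rewrite eq_le h addr_ge0 ?exprn_ge0.
by rewrite paddr_eq0 ?exprn_ge0 // !sqrf_eq0 !normr_eq0 => /andP[/eqP -> /eqP ->].
Qed.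

Lemma cross_terms_le (al be X Y p q r s : C) :
  0 <= al -> 0 <= be -> 0 <= X -> 0 <= Y ->
  `|p| ^+ 2 + `|q| ^+ 2 <= al * X -> `|r| ^+ 2 + `|s| ^+ 2 <= be * Y ->
  0 <= be * X + al * Y - (p * r + q * s) - (p * r + q * s)^*.
Proof.
move=> al0 be0 X0 Y0 hpq hrs.
have [al_eq0|al_neq0] := eqVneq al 0.
  move: hpq; rewrite al_eq0 mul0r => /sqr_normsD_le0[-> ->].
  by rewrite !mul0r !addr0 conjC0 !subr0 mulr_ge0.
have [be_eq0|be_neq0] := eqVneq be 0.
  move: hrs; rewrite be_eq0 mul0r => /sqr_normsD_le0[-> ->].
  by rewrite !mulr0 !mul0r !addr0 conjC0 !subr0 add0r mulr_ge0.
have al_gt0 : 0 < al by rewrite lt_def al_neq0.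
have be_gt0 : 0 < be by rewrite lt_def be_neq0.
rewrite -(pmulr_rge0 _ (mulr_gt0 al_gt0 be_gt0)).
have -> : al * be * (be * X + al * Y - (p * r + q * s) - (p * r + q * s)^*) =
    be ^+ 2 * (al * X - (`|p| ^+ 2 + `|q| ^+ 2)) +
    al ^+ 2 * (be * Y - (`|r| ^+ 2 + `|s| ^+ 2)) +
    `|be * p - al * r^*| ^+ 2 + `|be * q - al * s^*| ^+ 2.
  rewrite !normCK !rmorphB !rmorphM /= !rmorphD !rmorphM /= !conjCK.
  by rewrite (geC0_conj al0) (geC0_conj be0); ring.
by rewrite !addr_ge0 ?exprn_ge0 // mulr_ge0 ?exprn_ge0 ?subr_ge0.
Qed.

Lemma psd_form_ker n (A : 'M[C]_n) (u : 'cV[C]_n) :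
  A ^t* = A -> (forall v, 0 <= dot v (A *m v)) -> dot u (A *m u) = 0 -> A *m u = 0.
Proof.
move=> A_herm A_ge0 u0; set w := A *m u.
set nw := dot w w; set K := dot w (A *m w).
have K_ge0 : 0 <= K := A_ge0 w.
have K1_gt0 : 0 < K + 1 by rewrite ltr_wpDl.
(* the form at [u - t w] is [- 2 t nw + t^2 K] for real [t]; take [t := nw / (K + 1)] *)
set t := nw / (K + 1).
have t_real : t^* = t by apply/geC0_conj; rewrite divr_ge0 ?dot_self_ge0 ?ltW.
have := A_ge0 (u - t *: w).
rewrite mulmxBr -scalemxAr !dotBl !dotBr !dotZl !dotZr u0 -/w.
rewrite dot_mulmx A_herm -/w -/nw t_real -/K => ht.
have : 0 <= - (nw ^+ 2 * (K + 2)).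
  suff <- : (0 - t * nw - (t * nw - t * (t * K))) * (K + 1) ^+ 2 = - (nw ^+ 2 * (K + 2)).
    exact: mulr_ge0 ht (exprn_ge0 _ (ltW K1_gt0)).
  by rewrite /t; field; rewrite lt0r_neq0.
rewrite oppr_ge0 pmulr_lle0 ?ltr_wpDl // => nw2_le0.
have : nw ^+ 2 == 0 by rewrite eq_le nw2_le0 exprn_ge0 ?dot_self_ge0.
by rewrite sqrf_eq0 dot_self_eq0 => /eqP.
Qed.

Lemma mulmx_tens_conj_eq0 p n (A : 'M[C]_(p, n * n)) :
  (forall psi : 'cV[C]_n, A *m (psi *t map_mx conjC psi) = 0) -> A = 0.
Proof.
move=> hA; pose e k : 'cV[C]_n := delta_mx k 0.
have conj_e k : map_mx conjC (e k) = e k by apply/matrixP => i j; rewrite !mxE rmorph_nat.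
have hAe k : A *m (e k *t e k) = 0 by rewrite -{2}conj_e hA.
have polar k l (t : C) : t^* *: (A *m (e k *t e l)) + t *: (A *m (e l *t e k)) = 0.
  have conj_comb : map_mx conjC (e k + t *: e l) = e k + t^* *: e l.
    by apply/matrixP => i j; rewrite !mxE rmorphD rmorphM /= !rmorph_nat.
  have := hA (e k + t *: e l); rewrite conj_comb.
  rewrite !tensmxDl !tensmxDr !tensmxZl !tensmxZr !mulmxDr -!scalemxAr !hAe.
  by rewrite !scaler0 !addr0 add0r.
have hAkl k l : A *m (e k *t e l) = 0.
  have /eqP := polar k l 1; rewrite conjC1 !scale1r addr_eq0 => /eqP Ekl.
  have /eqP := polar k l 'i; rewrite Ekl conjCi scalerN -scaleNr -scalerDl.
  rewrite scaler_eq0 opprK -mulr2n mulrn_eq0 (negbTE (neq0Ci _)) /=.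
  by move/eqP ->; rewrite oppr0.
apply/matrixP => i j; case: (mxtens_indexP j) => k l.
have := congr1 (fun M : 'M[C]_(p, 1 * 1) => M i 0) (hAkl k l).
by rewrite tens_delta_col -colE !mxE.
Qed.

Lemma dot_antisym_conj n (U : 'M[C]_n) (a : 'cV[C]_n) :
  U^T = - U -> dot a (U *m map_mx conjC a) = 0.
Proof.
move=> UT; set b := map_mx conjC a; set s := b^T *m U *m b.
have s_tr : s^T = s by rewrite [s]mx11_scalar tr_scalar_mx.
have s_opp : s = - s.
  by rewrite -{1}s_tr /s !trmx_mul trmxK UT mulNmx mulmxN mulmxA.
have -> : dot a (U *m b) = s 0 0 by rewrite /dot /s map_trmx mulmxA.
have /eqP : s 0 0 = - s 0 0 by rewrite {1}s_opp mxE.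
by rewrite -addr_eq0 -mulr2n mulrn_eq0 /= => /eqP.
Qed.

Lemma dot_unitary n (U : 'M[C]_n) (v w : 'cV[C]_n) :
  U \is unitarymx -> dot (U *m v) (U *m w) = dot v w.
Proof.
by move=> /unitarymxP /mulmx1C UU; rewrite dot_mulmx mulmxA UU mul1mx.
Qed.

End DotProduct.

Section PhiU.
Variables (R : realType) (N : nat) (U : 'M[R[i]]_(2 * N)).
Local Notation C := R[i].

Lemma PhiUD X Y : PhiU U (X + Y) = PhiU U X + PhiU U Y.
Proof.
rewrite /PhiU -scalerDr add_block_mx; congr (_ *: _).
rewrite -[X]submxK -[Y]submxK add_block_mx.
rewrite !(block_mxKul, block_mxKur, block_mxKdl, block_mxKdr).
rewrite !mxtraceD !scalerDl ![(_ + _)^T]linearD /= !mulmxDr !mulmxDl.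
by congr block_mx; rewrite addrACA opprD.
Qed.

Lemma PhiUZ k X : PhiU U (k *: X) = k *: PhiU U X.
Proof.
rewrite /PhiU scalerA mulrC -scalerA scale_block_mx; congr (_ *: _).
rewrite -[X]submxK scale_block_mx.
rewrite !(block_mxKul, block_mxKur, block_mxKdl, block_mxKdr).
rewrite !mxtraceZ ![(_ *: _)^T]linearZ /= -!scalemxAr -!scalemxAl -!scalerDr.
by congr block_mx; rewrite ?scalerN // scalerA mulrC.
Qed.

Fact PhiU_is_linear : linear (PhiU U).
Proof. by move=> k X Y; rewrite PhiUD PhiUZ. Qed.

HB.instance Definition _ := GRing.isLinear.Build C _ _ _ (PhiU U) PhiU_is_linear.

End PhiU.

Section Witness.
Variables (R : realType) (N : nat) (U : 'M[R[i]]_(2 * N)).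
Local Notation C := R[i].

Lemma PhiU_outer_form (a b x y : 'cV[C]_(2 * N)) :
  let c := U *m map_mx conjC a in let d := U *m map_mx conjC b in
  let z := dot x a * dot b y + dot x c * dot d y in
  dot (col_mx x y) (PhiU U (col_mx a b *m (col_mx a b) ^t*) *m col_mx x y) =
  (2 * N)%:R^-1 * (dot b b * dot x x + dot a a * dot y y - z - z^*).
Proof.
move=> c d z.
have twist (u v : 'cV[C]_(2 * N)) :
    U *m (v *m u ^t*)^T *m adjmx U = (U *m map_mx conjC u) *m (U *m map_mx conjC v) ^t*.
  by rewrite trmx_mul tr_trmxC trmxC_mul trmxC_map_conj !mulmxA.
rewrite tr_col_mx map_row_mx mul_col_row /PhiU -scalemxAl dotZr; congr (_ * _).
rewrite !(block_mxKul, block_mxKur, block_mxKdl, block_mxKdr) !mxtrace_outer !twist -/c -/d.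
exact: dot_block_outer.
Qed.

Hypothesis U_unitary : U \is unitarymx.
Hypothesis U_antisym : U^T = - U.

Lemma PhiU_outer_ge0 (v w : 'cV[C]_(2 * N + 2 * N)) :
  0 <= dot w (PhiU U (v *m v ^t*) *m w).
Proof.
rewrite -[v]vsubmxK -[w]vsubmxK PhiU_outer_form.
set a := usubmx v; set b := dsubmx v; set x := usubmx w; set y := dsubmx w.
have bessel u t : `|dot t u| ^+ 2 + `|dot t (U *m map_mx conjC u)| ^+ 2 <= dot u u * dot t t.
  by apply: bessel_orthogonal_pair; rewrite ?dot_antisym_conj ?dot_unitary ?dot_map_conj.
apply: mulr_ge0; first by rewrite invr_ge0 ler0n.
apply: (cross_terms_le (dot_self_ge0 _) (dot_self_ge0 _) (dot_self_ge0 _) (dot_self_ge0 _)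
  (bessel _ _)).
by rewrite (dotC y b) (dotC y (U *m _)) !norm_conjC; apply: bessel.
Qed.

Lemma PhiU_outer_self (v : 'cV[C]_(2 * N + 2 * N)) :
  dot v (PhiU U (v *m v ^t*) *m v) = 0.
Proof.
rewrite -[v]vsubmxK PhiU_outer_form; set a := usubmx v; set b := dsubmx v.
rewrite dot_antisym_conj // (dotC _ (U *m _)) dot_antisym_conj // conjC0 !mul0r !addr0.
by rewrite rmorphM /= !conj_dot_self [dot b b * _]mulrC addrK subrr mulr0.
Qed.

Lemma W_U_tens_form (psi phi : 'cV[C]_(2 * N + 2 * N)) :
  (adjmx (psi *t phi) *m W_U U *m (psi *t phi)) 0 0 =
  (4 * N)%:R^-1 * dot phi (PhiU U (map_mx conjC psi *m (map_mx conjC psi) ^t*) *m phi).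
Proof.
rewrite /adjmx trmxC_tens /W_U -scalemxAr -scalemxAl mxE; congr (_ * _).
rewrite [map_mx _ psi *m _]matrix_sum_delta !linear_sum /= !mulmx_suml summxE dot_sumr.
apply: eq_bigr => k _; rewrite !linear_sum /= !mulmx_suml summxE dot_sumr.
apply: eq_bigr => l _; rewrite linearZ /= -scalemxAl dotZr !tensmx_mul tensmx11.
by rewrite -mulmx_quadE quad_delta; congr (_ * _); rewrite mxE big_ord1 !mxE conjCK.
Qed.

Lemma W_U_block_positive : block_positive (W_U U).
Proof.
move=> psi phi; rewrite W_U_tens_form; apply: mulr_ge0; first by rewrite invr_ge0 ler0n.
exact: PhiU_outer_ge0.
Qed.

Lemma W_U_tens_conj (psi : 'cV[C]_(2 * N + 2 * N)) :
  (adjmx (psi *t map_mx conjC psi) *m W_U U *m (psi *t map_mx conjC psi)) 0 0 = 0.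
Proof. by rewrite W_U_tens_form PhiU_outer_self mulr0. Qed.

Lemma W_U_face_trivial (A : 'M[C]_((2 * N + 2 * N) * (2 * N + 2 * N))) :
  psdmx A -> block_positive (W_U U - A) -> A = 0.
Proof.
move=> [A_herm A_ge0] WA_bpos; apply: mulmx_tens_conj_eq0 => psi.
have A_form_ge0 u : 0 <= dot u (A *m u) by rewrite -mulmx_quadE; apply: A_ge0.
apply: (psd_form_ker A_herm A_form_ge0); apply/eqP; rewrite eq_le A_form_ge0 andbT.
have := WA_bpos psi (map_mx conjC psi).
rewrite mulmxBr mulmxBl [X in 0 <= X]mxE [X in _ + X]mxE W_U_tens_conj add0r oppr_ge0.
by rewrite /dot mulmxA.
Qed.

Lemma W_U_neq0 : (0 < N)%N -> W_U U != 0.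
Proof.
move=> N_gt0; apply/eqP => W0.
have i0 : 'I_(2 * N) by exists 0%N; rewrite muln_gt0.
pose a : 'cV[C]_(2 * N) := delta_mx i0 0.
have a_neq0 : dot a a != 0.
  rewrite dot_self_eq0; apply/eqP => /matrixP/(_ i0 0).
  by rewrite !mxE !eqxx => /eqP; rewrite oner_eq0.
have := W_U_tens_form (map_mx conjC (col_mx a 0)) (col_mx 0 a).
rewrite map_mxCK PhiU_outer_form W0 mulmx0 mul0mx mxE !dot0l !mul0r !add0r conjC0 !subr0.
move/esym/eqP; rewrite !mulf_eq0 !invr_eq0 !pnatr_eq0 !muln_eq0 /= (negbTE a_neq0).
by rewrite eqn0Ngt N_gt0.
Qed.

End Witness.

Theorem proposition3 (R : realType) (N : nat) (hN : (1 <= N)%N)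
  (U : 'M[R[i]]_(2 * N)) (hU : U \is unitarymx) (hUT : U^T = - U) :
  optimal_EW (W_U U).
Proof.
have face := W_U_face_trivial hUT.
split; [split|].
- exact: W_U_block_positive hU hUT.
- move=> /face W0; move/negP: (W_U_neq0 U hN); apply; apply/eqP/W0.
  by rewrite subrr => psi phi; rewrite mulmx0 mul0mx mxE.
- by case=> A [A_neq0 [/face A0 /A0 A_eq0]]; move: A_neq0; rewrite A_eq0 eqxx.
Qed.
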